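(* Let $(\mathbb{R}^n,S)$ and $(\mathbb{R}^m,T)$ be topological Alexander quandles, where $S$, $T$ are continuous additive automorphisms such that $I-S$ and $I-T$ are invertible. Let $F:\mathbb{R}^n\to\mathbb{R}^m$ be a continuous quandle homomorphism with $F(0)=0$. Then $S$, $T$ and $F$ are $\mathbb{R}$-linear and $FS=TF$.
   Context: The topological Alexander quandle $(\mathbb{R}^n,S)$ has operation $x*y=Sx+(I-S)y$. A quandle homomorphism $F$ satisfies $F(x*y)=F(x)*F(y)$, here $F(Sx+(I-S)y)=TF(x)+(I-T)F(y)$. *)

From Stdlib Require Import Reals.
From Stdlib Require Vectors.Fin.
Open Scope R_scope.

Definition Vec (n : nat) : Type := Fin.t n -> R.

Definition vadd {n} (x y : Vec n) : Vec n := fun i => x i + y i.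
Definition vsub {n} (x y : Vec n) : Vec n := fun i => x i - y i.
Definition vscale {n} (c : R) (x : Vec n) : Vec n := fun i => c * x i.
Definition vzero (n : nat) : Vec n := fun _ => 0.

(* Continuity w.r.t. the usual (product = Euclidean) topology on R^n, R^m. *)
Definition vcontinuous {n m} (F : Vec n -> Vec m) : Prop :=
  forall x : Vec n, forall eps, eps > 0 -> exists delta, delta > 0 /\
    forall y : Vec n, (forall i, Rabs (y i - x i) < delta) ->
      forall j, Rabs (F y j - F x j) < eps.

Definition additive {n m} (F : Vec n -> Vec m) : Prop :=
  forall x y, F (vadd x y) = vadd (F x) (F y).

Definition bijective {A B : Type} (f : A -> B) : Prop :=
  exists g : B -> A, (forall a, g (f a) = a) /\ (forall b, f (g b) = b).

Definition IminusS {n} (S : Vec n -> Vec n) : Vec n -> Vec n :=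
  fun x => vsub x (S x).

Definition alex_op {n} (S : Vec n -> Vec n) (x y : Vec n) : Vec n :=
  vadd (S x) (IminusS S y).

Definition top_alexander {n} (S : Vec n -> Vec n) : Prop :=
  vcontinuous S /\ additive S /\ bijective S /\ bijective (IminusS S).

Definition quandle_hom {n m} (S : Vec n -> Vec n) (T : Vec m -> Vec m)
  (F : Vec n -> Vec m) : Prop :=
  forall x y, F (alex_op S x y) = alex_op T (F x) (F y).

Definition R_linear {n m} (F : Vec n -> Vec m) : Prop :=
  additive F /\ forall (c : R) x, F (vscale c x) = vscale c (F x).

(* Evaluating the homomorphism identity F(S x + (I-S) y) = T F x + (I-T) F y at y = 0 and at
   x = 0 gives F S = T F and F (I-S) = (I-T) F; since S and I-S are onto, every pair a, b is of
   the form S x, (I-S) y, whence F (a + b) = F a + F b. So S, T and F are additive and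
   continuous, and a continuous additive map between real vector spaces is R-linear: along each
   line it is linear on the rationals by additivity, hence everywhere by continuity. *)

From Stdlib Require Import Reals.
From Stdlib Require Import Lra Lia ZArith FunctionalExtensionality.
Open Scope R_scope.

Lemma Rabs_lt_all_eq0 (x : R) : (forall e, e > 0 -> Rabs x < e) -> x = 0.
Proof.
  intro Hsmall. destruct (Req_dec x 0) as [Hx | Hx]; [exact Hx |].
  pose proof (Rabs_pos_lt x Hx) as Hpos. specialize (Hsmall _ Hpos). lra.
Qed.

Lemma rational_approx_right (c d : R) : 0 < d ->
  exists (z : Z) (N : nat), (0 < N)%nat /\ 0 <= IZR z / INR N - c < d.
Proof.
  intro Hd. destruct (archimed_cor1 d Hd) as [N [HNd HN]].
  assert (HNpos : 0 < INR N) by (apply lt_0_INR; lia).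
  destruct (archimed (c * INR N)) as [Hup1 Hup2].
  exists (up (c * INR N)), N. split; [exact HN |].
  assert (Hdiff : IZR (up (c * INR N)) / INR N - c
                  = (IZR (up (c * INR N)) - c * INR N) * / INR N) by (field; lra).
  rewrite Hdiff. pose proof (Rinv_0_lt_compat _ HNpos). split; nra.
Qed.

Section AdditiveReal.

Variable h : R -> R.
Hypothesis h_add : forall a b, h (a + b) = h a + h b.

Lemma additive_R_0 : h 0 = 0.
Proof. pose proof (h_add 0 0) as H. rewrite Rplus_0_r in H. lra. Qed.

Lemma additive_R_opp (a : R) : h (- a) = - h a.
Proof.
  pose proof (h_add a (- a)) as H. rewrite Rplus_opp_r, additive_R_0 in H. lra.
Qed.

Lemma additive_R_natmul (k : nat) (a : R) : h (INR k * a) = INR k * h a.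
Proof.
  induction k as [| k IHk].
  - simpl. rewrite Rmult_0_l, additive_R_0. ring.
  - rewrite S_INR. replace ((INR k + 1) * a) with (INR k * a + a) by ring.
    rewrite h_add, IHk. ring.
Qed.

Lemma additive_R_intmul (z : Z) (a : R) : h (IZR z * a) = IZR z * h a.
Proof.
  destruct (Z_le_gt_dec 0 z).
  - rewrite <- (Z2Nat.id z), <- INR_IZR_INZ by lia. apply additive_R_natmul.
  - replace z with (- Z.of_nat (Z.to_nat (- z)))%Z by lia.
    rewrite opp_IZR, <- INR_IZR_INZ, !Ropp_mult_distr_l_reverse.
    rewrite additive_R_opp, additive_R_natmul. ring.
Qed.

Lemma additive_R_ratmul (z : Z) (N : nat) : (0 < N)%nat ->
  h (IZR z / INR N) = IZR z / INR N * h 1.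
Proof.
  intro HN. assert (HNpos : 0 < INR N) by (apply lt_0_INR; lia).
  apply (Rmult_eq_reg_l (INR N)); [| lra].
  rewrite <- additive_R_natmul.
  replace (INR N * (IZR z / INR N)) with (IZR z * 1) by (field; lra).
  rewrite additive_R_intmul. field. lra.
Qed.

Hypothesis h_cont : forall c eps, eps > 0 -> exists d, d > 0 /\
  forall c', Rabs (c' - c) < d -> Rabs (h c' - h c) < eps.

Lemma additive_continuous_R_linear (c : R) : h c = c * h 1.
Proof.
  apply Rminus_diag_uniq, Rabs_lt_all_eq0. intros e He.
  destruct (h_cont c (e / 2)) as [d [Hd Hcont]]; [lra |].
  set (K := Rabs (h 1) + 1).
  assert (HK : 0 < K) by (pose proof (Rabs_pos (h 1)); unfold K; lra).
  destruct (rational_approx_right c (Rmin d (e / (2 * K)))) as [z [N [HN [Hq0 Hq1]]]].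
  { apply Rmin_pos; [lra | apply Rdiv_lt_0_compat; lra]. }
  set (q := IZR z / INR N) in Hq0, Hq1.
  assert (Hqc : Rabs (q - c) < d).
  { rewrite Rabs_right by lra. pose proof (Rmin_l d (e / (2 * K))). lra. }
  assert (Hlin : Rabs ((q - c) * h 1) < e / 2).
  { rewrite Rabs_mult, Rabs_right by lra.
    pose proof (Rmin_r d (e / (2 * K))) as Hmin.
    assert (Hq : (q - c) * (2 * K) < e).
    { apply (Rmult_lt_reg_r (/ (2 * K))); [apply Rinv_0_lt_compat; lra |].
      replace ((q - c) * (2 * K) * / (2 * K)) with (q - c) by (field; lra).
      unfold Rdiv in Hmin. lra. }
    unfold K in Hq. pose proof (Rabs_pos (h 1)). nra. }
  specialize (Hcont q Hqc). unfold q in Hcont.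
  rewrite additive_R_ratmul in Hcont by exact HN. fold q in Hcont.
  replace (h c - c * h 1) with (- (q * h 1 - h c) + (q - c) * h 1) by ring.
  eapply Rle_lt_trans; [apply Rabs_triang |]. rewrite Rabs_Ropp. lra.
Qed.

End AdditiveReal.

Lemma vec_ext {n} (x y : Vec n) : (forall i, x i = y i) -> x = y.
Proof. apply functional_extensionality. Qed.

Ltac vec_ring := apply vec_ext; intro; unfold vadd, vsub, vscale, vzero; ring.

Lemma vec_bounded {n} (x : Vec n) : exists M, 0 <= M /\ forall i, Rabs (x i) <= M.
Proof.
  induction n as [| n IHn].
  - exists 0. split; [lra |]. intro i. inversion i.
  - destruct (IHn (fun i => x (Fin.FS i))) as [M [HM0 HM]].
    exists (Rmax (Rabs (x Fin.F1)) M). split.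
    + eapply Rle_trans; [exact HM0 | apply Rmax_r].
    + intro i. apply (Fin.caseS' i (fun i => Rabs (x i) <= Rmax (Rabs (x Fin.F1)) M)).
      * apply Rmax_l.
      * intro p. eapply Rle_trans; [apply HM | apply Rmax_r].
Qed.

Lemma vcontinuous_along_line {n m} (F : Vec n -> Vec m) (x : Vec n) (j : Fin.t m) :
  vcontinuous F -> forall c eps, eps > 0 -> exists d, d > 0 /\
    forall c', Rabs (c' - c) < d -> Rabs (F (vscale c' x) j - F (vscale c x) j) < eps.
Proof.
  intros HF c eps Heps. destruct (HF (vscale c x) eps Heps) as [d [Hd Hcont]].
  destruct (vec_bounded x) as [M [HM0 HM]].
  exists (d / (M + 1)). split; [apply Rdiv_lt_0_compat; lra |].
  intros c' Hc'. apply Hcont. intro i. unfold vscale.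
  replace (c' * x i - c * x i) with ((c' - c) * x i) by ring.
  rewrite Rabs_mult. specialize (HM i). pose proof (Rabs_pos (c' - c)).
  apply Rle_lt_trans with (Rabs (c' - c) * (M + 1)); [apply Rmult_le_compat_l; lra |].
  apply (Rmult_lt_reg_r (/ (M + 1))); [apply Rinv_0_lt_compat; lra |].
  rewrite Rmult_assoc, Rinv_r, Rmult_1_r by lra. exact Hc'.
Qed.

Lemma additive_vcontinuous_R_linear {n m} (F : Vec n -> Vec m) :
  additive F -> vcontinuous F -> R_linear F.
Proof.
  intros Hadd Hcont. split; [exact Hadd |]. intros c x. apply vec_ext. intro j.
  set (h := fun a => F (vscale a x) j).
  assert (Hh : h c = c * h 1).
  { apply additive_continuous_R_linear.
    - intros a b. unfold h.
      replace (vscale (a + b) x) with (vadd (vscale a x) (vscale b x)) by vec_ring.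
      rewrite Hadd. reflexivity.
    - exact (vcontinuous_along_line F x j Hcont). }
  unfold h in Hh. rewrite Hh. unfold vscale at 2.
  replace (vscale 1 x) with x by vec_ring. reflexivity.
Qed.

Lemma additive_vzero {n m} (F : Vec n -> Vec m) : additive F -> F (vzero n) = vzero m.
Proof.
  intro Hadd. pose proof (Hadd (vzero n) (vzero n)) as H.
  replace (vadd (vzero n) (vzero n)) with (vzero n) in H by vec_ring.
  apply vec_ext. intro i. apply (f_equal (fun v => v i)) in H.
  unfold vadd in H. unfold vzero at 2. lra.
Qed.

Section AlexanderHom.

Variables (n m : nat) (S : Vec n -> Vec n) (T : Vec m -> Vec m) (F : Vec n -> Vec m).
Hypotheses (S_add : additive S) (T_add : additive T).
Hypotheses (F_hom : quandle_hom S T F) (F_0 : F (vzero n) = vzero m).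

Lemma quandle_hom_comm (x : Vec n) : F (S x) = T (F x).
Proof.
  pose proof (F_hom x (vzero n)) as H. unfold alex_op, IminusS in H.
  rewrite F_0, (additive_vzero S S_add), (additive_vzero T T_add) in H.
  replace (vadd (S x) (vsub (vzero n) (vzero n))) with (S x) in H by vec_ring.
  rewrite H. vec_ring.
Qed.

Lemma quandle_hom_IminusS (y : Vec n) : F (IminusS S y) = IminusS T (F y).
Proof.
  pose proof (F_hom (vzero n) y) as H. unfold alex_op in H.
  rewrite F_0, (additive_vzero S S_add), (additive_vzero T T_add) in H.
  replace (vadd (vzero n) (IminusS S y)) with (IminusS S y) in H by vec_ring.
  rewrite H. vec_ring.
Qed.

Lemma quandle_hom_additive : bijective S -> bijective (IminusS S) -> additive F.
Proof.
  intros [s [_ Hs]] [g [_ Hg]] a b.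
  rewrite <- (Hs a), <- (Hg b).
  change (vadd (S (s a)) (IminusS S (g b))) with (alex_op S (s a) (g b)).
  rewrite F_hom, quandle_hom_comm, quandle_hom_IminusS. reflexivity.
Qed.

End AlexanderHom.

Theorem mainTheorem14 (n m : nat) (S : Vec n -> Vec n) (T : Vec m -> Vec m)
  (F : Vec n -> Vec m)
  (hS : top_alexander S) (hT : top_alexander T)
  (hFc : vcontinuous F) (hFq : quandle_hom S T F)
  (hF0 : F (vzero n) = vzero m) :
  R_linear S /\ R_linear T /\ R_linear F /\ (forall x, F (S x) = T (F x)).
Proof.
  destruct hS as [S_cont [S_add [S_bij IS_bij]]].
  destruct hT as [T_cont [T_add _]].
  pose proof (quandle_hom_additive n m S T F S_add T_add hFq hF0 S_bij IS_bij) as F_add.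
  split; [exact (additive_vcontinuous_R_linear S S_add S_cont) |].
  split; [exact (additive_vcontinuous_R_linear T T_add T_cont) |].
  split; [exact (additive_vcontinuous_R_linear F F_add hFc) |].
  exact (quandle_hom_comm n m S T F S_add T_add hFq hF0).
Qed.
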